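(* Let $m \geq 2$ be an integer and let $p \in \left(\frac{1}{m}, 1\right)$. Then $$\mathbb{P}_{X \sim B(m,p)}\big[X \geq mp\big] \;\geq\; 1 - \max_{k \in \{1, \ldots, m-1\}} \mathbb{P}_{X \sim B(m,\frac{k}{m})}\big[X \leq k\big].$$
   Context: $B(m,p)$ denotes the binomial distribution with $m$ trials and success probability $p$: $\mathbb{P}[X=j]=\binom{m}{j}p^j(1-p)^{m-j}$ for $j=0,\dots,m$; its mean is $mp$. *)

From HB Require Import structures.
From mathcomp Require Import all_boot all_order all_algebra.
Set Implicit Arguments. Unset Strict Implicit. Unset Printing Implicit Defensive.
Import Order.TTheory GRing.Theory Num.Theory.
Local Open Scope ring_scope.

Definition binom_pmf {R : realFieldType} (m : nat) (p : R) (j : nat) : R :=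
  ('C(m, j))%:R * p ^+ j * (1 - p) ^+ (m - j).

Definition binom_ge {R : realFieldType} (m : nat) (p t : R) : R :=
  \sum_(0 <= j < m.+1 | t <= j%:R) binom_pmf m p j.

Definition binom_le {R : realFieldType} (m : nat) (p : R) (k : nat) : R :=
  \sum_(0 <= j < m.+1 | (j <= k)%N) binom_pmf m p j.

From HB Require Import structures.
From mathcomp Require Import all_boot all_order all_algebra.
From mathcomp Require Import ring lra zify.
Import Order.TTheory GRing.Theory Num.Theory.
Local Open Scope ring_scope.

(* Let X ~ B(m, p) and let k be the largest integer with k < mp;
   since 1 < mp < m we have 1 <= k <= m - 1.  An integer j satisfies j >= mp
   exactly when j > k, so P[X >= mp] = 1 - P[X <= k].  The distribution
   function p |-> P_{B(m,p)}[X <= k] is nonincreasing on [0, 1], and k/m < p,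
   hence P_{B(m,p)}[X <= k] <= P_{B(m,k/m)}[X <= k], which is one of the terms
   of the maximum. *)

Section BinomialCdf.
Variable R : realFieldType.
Implicit Types p q : R.

Lemma binom_pmf_out m p j : (m < j)%N -> binom_pmf m p j = 0.
Proof. by move=> ltmj; rewrite /binom_pmf bin_small // !mul0r. Qed.

(* Pascal recursion: one more trial either succeeds or fails. *)
Lemma binom_pmfS m p j :
  binom_pmf m.+1 p j.+1 = p * binom_pmf m p j + (1 - p) * binom_pmf m p j.+1.
Proof.
rewrite /binom_pmf binS natrD subSS.
have [ltjm | lemj] := ltnP j m.
  have -> : (m - j = (m - j.+1).+1)%N by lia.
  rewrite !exprS; ring.
have -> : 'C(m, j.+1) = 0%N by apply: bin_small; lia.
rewrite !mul0r mulr0 addr0 exprS; ring.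
Qed.

Lemma binom_pmfS0 m p : binom_pmf m.+1 p 0 = (1 - p) * binom_pmf m p 0.
Proof. by rewrite /binom_pmf !bin0 !subn0 exprS; ring. Qed.

Lemma binom_pmf_ge0 m p j : 0 <= p <= 1 -> 0 <= binom_pmf m p j.
Proof.
case/andP=> p_ge0 p_le1; rewrite /binom_pmf.
by rewrite !mulr_ge0 ?ler0n ?exprn_ge0 ?subr_ge0.
Qed.

(* The distribution function P[X <= k], indexed by ordinals for recursion. *)
Definition binom_cdf m p k : R := \sum_(j < k.+1) binom_pmf m p j.

(* [binom_le] is the distribution function: the range of summation does not
   matter once it covers both [0, k] and the support [0, m]. *)
Lemma binom_leE m p k : binom_le m p k = binom_cdf m p k.
Proof.
rewrite /binom_le /binom_cdf.
transitivity (\sum_(0 <= j < (m + k).+1 | (j <= k)%N) binom_pmf m p j).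
  rewrite [RHS](big_cat_nat (n := m.+1)) //=; last by lia.
  rewrite [X in _ = _ + X]big1_seq ?addr0 // => j /andP[_].
  by rewrite mem_index_iota => /andP[lemj _]; apply: binom_pmf_out; lia.
rewrite (big_cat_nat (n := k.+1)) //=; last by lia.
rewrite [X in _ + X]big1_seq ?addr0; last first.
  by move=> j /andP[lejk]; rewrite mem_index_iota => /andP[ltkj _]; lia.
by rewrite big_mkord; apply: eq_bigl => i; rewrite -ltnS ltn_ord.
Qed.

Lemma binom_cdf0 p k : binom_cdf 0 p k = 1.
Proof.
rewrite /binom_cdf big_ord_recl big1 ?addr0; last first.
  by move=> i _; apply: binom_pmf_out.
by rewrite /binom_pmf bin0 !expr0 !mulr1.
Qed.

Lemma binom_cdfS0 m p : binom_cdf m.+1 p 0 = (1 - p) * binom_cdf m p 0.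
Proof. by rewrite /binom_cdf !big_ord1 binom_pmfS0. Qed.

Lemma binom_cdfS m p k :
  binom_cdf m.+1 p k.+1 = p * binom_cdf m p k + (1 - p) * binom_cdf m p k.+1.
Proof.
rewrite /binom_cdf !(big_ord_recl k.+1).
under eq_bigr => i _ do rewrite lift0 binom_pmfS.
rewrite big_split /= -!mulr_sumr binom_pmfS0; ring.
Qed.

Lemma binom_cdf_ge0 m p k : 0 <= p <= 1 -> 0 <= binom_cdf m p k.
Proof. by move=> p01; apply: sumr_ge0 => i _; apply: binom_pmf_ge0. Qed.

Lemma binom_cdf_leS m p k : 0 <= p <= 1 -> binom_cdf m p k <= binom_cdf m p k.+1.
Proof.
by move=> p01; rewrite /binom_cdf (big_ord_recr k.+1) lerDl binom_pmf_ge0.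
Qed.

Lemma binom_cdf_full m p k : (m <= k)%N -> binom_cdf m p k = 1.
Proof.
elim: m k => [|m IHm] [|k] lemk //; rewrite ?binom_cdf0 //.
by rewrite binom_cdfS !IHm //; [ring | lia].
Qed.

Lemma binom_cdf_antitone m q p k :
  0 <= q -> q <= p -> p <= 1 -> binom_cdf m p k <= binom_cdf m q k.
Proof.
move=> q_ge0 le_qp p_le1; have q01 : 0 <= q <= 1 by apply/andP; lra.
elim: m k => [|m IHm] [|k]; rewrite ?binom_cdf0 //.
  by rewrite !binom_cdfS0 ler_pM ?subr_ge0 ?binom_cdf_ge0 ?IHm //; lra.
(* Compare termwise using the induction hypothesis, then move the weight
   p - q from the k-th to the (k+1)-th value of the monotone cdf at q. *)
rewrite !binom_cdfS.
have le_k := IHm k; have le_kS := IHm k.+1.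
have q_step := binom_cdf_leS m q k q01.
have ih_k : p * binom_cdf m p k <= p * binom_cdf m q k.
  by rewrite ler_wpM2l //; lra.
have ih_kS : (1 - p) * binom_cdf m p k.+1 <= (1 - p) * binom_cdf m q k.+1.
  by rewrite ler_wpM2l //; lra.
have shift : (p - q) * binom_cdf m q k <= (p - q) * binom_cdf m q k.+1.
  by rewrite ler_wpM2l //; lra.
nra.
Qed.

Lemma binom_ge_compl m p t k :
  (forall j, (t <= j%:R) = (k < j)%N) -> binom_ge m p t = 1 - binom_le m p k.
Proof.
move=> sep.
have total : \sum_(0 <= j < m.+1) binom_pmf m p j = 1.
  by rewrite -(binom_cdf_full m p m (leqnn m)) /binom_cdf big_mkord.
rewrite -total /binom_ge /binom_le [in RHS](bigID (fun j => (j <= k)%N)) /=.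
by rewrite addrAC subrr add0r; apply: eq_bigl => j; rewrite sep ltnNge.
Qed.

End BinomialCdf.

(* For a real 1 < t <= m there is an integer 1 <= k < m such that the integers
   j >= t are exactly those above k (k is the largest integer below t). *)
Lemma int_below {R : realFieldType} {m : nat} {t : R} :
  1 < t -> t <= m%:R ->
  exists2 k, (0 < k < m)%N & forall j, (t <= j%:R) = (k < j)%N.
Proof.
move=> t_gt1 t_lem.
pose below j := (j <= m)%N && (j%:R < t).
have ex_below : exists j, below j by exists 0%N; rewrite /below leq0n /=; lra.
have below_le : forall j, below j -> (j <= m)%N by move=> j /andP[].
case: (ex_maxnP ex_below below_le) => k /andP[lekm ltkt] maxk.
have sep : forall j, (t <= j%:R) = (k < j)%N.
  move=> j; rewrite leNgt ltnNge; congr negb; apply/idP/idP => [ltjt | lejk].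
    have [lejm | ltmj] := leqP j m; first by apply: maxk; rewrite /below lejm.
    by move: ltjt; rewrite ltNge (le_trans t_lem) // ler_nat ltnW.
  by apply: le_lt_trans ltkt; rewrite ler_nat.
exists k => //; apply/andP; split.
- by rewrite lt0n; apply/eqP => k0; have := sep 1%N; rewrite k0 leNgt t_gt1.
- by rewrite -(ltr_nat R); apply: lt_le_trans t_lem.
Qed.

Theorem corollary1 (R : realFieldType) (m : nat) (p : R)
  (hm : (2 <= m)%N) (hp1 : 1 / m%:R < p) (hp2 : p < 1) :
  binom_ge m p (m%:R * p) >=
  1 - \big[Num.max/0]_(1 <= k < m) binom_le m (k%:R / m%:R) k.
Proof.
have m_gt0 : (0 : R) < m%:R by rewrite ltr0n; lia.
have mp_gt1 : 1 < m%:R * p by rewrite mulrC -ltr_pdivrMr.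
have mp_le_m : m%:R * p <= m%:R by rewrite -{2}(mulr1 m%:R) ler_pM2l //; lra.
have [k /andP[k_gt0 k_ltm] sep] := int_below mp_gt1 mp_le_m.
rewrite (binom_ge_compl _ _ _ _ _ sep) lerD2l lerN2.
have km_lt_p : k%:R / m%:R < p by rewrite ltr_pdivrMr // mulrC ltNge sep -leqNgt.
have cdf_le : binom_le m p k <= binom_le m (k%:R / m%:R) k.
  by rewrite !binom_leE binom_cdf_antitone ?divr_ge0 ?ler0n //; lra.
apply: (le_trans cdf_le).
by apply: (le_bigmax_seq _ k predT (fun i => binom_le m (i%:R / m%:R) i));
  rewrite ?mem_index_iota ?k_gt0.
Qed.
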